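(* Let $\mathcal A\in\mathbb R^{n_1}\otimes\cdots\otimes\mathbb R^{n_k}$, $1\le s\le k$, $r\le\min\{n_1,\dots,n_k\}$. A point $(U,\mathbf x)\in W_{\mathbf n,r,*}$ is a critical point of $g(U,\mathbf x)=\frac12\|\mathcal A-(U^{(1)},\dots,U^{(k)})\cdot\operatorname{diag}_k(\mathbf x)\|^2$ on $W_{\mathbf n,r,*}$ if and only if $(U,\operatorname{diag}_k(\mathbf x))$ is a KKT point of problem (LRPOTA).
   Context: $\mathrm V(r,n)=\{U\in\mathbb R^{n\times r}:U^{\mathsf T}U=I_r\}$; $\mathrm B(r,n)$: $n\times r$ real matrices with unit columns; $\mathrm{OB}(r,n)$: full-column-rank elements of $\mathrm B(r,n)$. $W_{\mathbf n,r,*}=\mathrm V(r,n_1)\times\cdots\times\mathrm V(r,n_s)\times\mathrm{OB}(r,n_{s+1})\times\cdots\times\mathrm{OB}(r,n_k)\times(\mathbb R\setminus\{0\})^r$, a smooth manifold; critical points of $g$ on it are points where its Riemannian gradient vanishes. $(U^{(1)},\dots,U^{(k)})\cdot\operatorname{diag}_k(\mathbf x)=\sum_jx_j\mathbf u^{(1)}_j\otimes\cdots\otimes\mathbf u^{(k)}_j$. Problem (LRPOTA): minimize $G(U,\lambda)=\|\mathcal A-(U^{(1)},\dots,U^{(k)})\cdot\operatorname{diag}_k(\lambda)\|^2$ over $\lambda\in\mathbb R^r$, $U^{(i)}\in\mathrm V(r,n_i)$ ($i\le s$), $U^{(i)}\in\mathrm B(r,n_i)$ ($i>s$). A feasible $(U,\operatorname{diag}_k(\lambda))$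 is a KKT point if there exist symmetric $P_1,\dots,P_s\in\mathbb R^{r\times r}$ and $\mathbf p_{s+1},\dots,\mathbf p_k\in\mathbb R^r$ with $\nabla_{U^{(i)}}G(U,\lambda)=U^{(i)}P_i$ for $i\le s$, $\nabla_{U^{(i)}}G(U,\lambda)=U^{(i)}\operatorname{diag}(\mathbf p_i)$ for $i>s$, and $\nabla_\lambda G(U,\lambda)=0$ (Lagrange stationarity for the constraints $(U^{(i)})^{\mathsf T}U^{(i)}=I_r$ and unit-norm columns). *)

From HB Require Import structures.
From mathcomp Require Import all_boot all_order all_algebra.
From mathcomp Require Import all_classical all_reals all_analysis.
Set Implicit Arguments. Unset Strict Implicit. Unset Printing Implicit Defensive.
Import Order.TTheory GRing.Theory Num.Theory.
Local Open Scope ring_scope.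

Section LRPOTA.
Variables (R : realType) (k : nat) (n : 'I_k -> nat) (r : nat).

Definition midx := {dffun forall i : 'I_k, 'I_(n i)}.
Definition tensor := midx -> R.
Definition factors := forall i : 'I_k, 'M[R]_(n i, r).

(* (U^(1),...,U^(k)) . diag_k(x) = sum_j x_j u^(1)_j ⊗ ... ⊗ u^(k)_j *)
Definition mlmul (U : factors) (x : 'rV[R]_r) : tensor :=
  fun a => \sum_(j < r) x 0 j * \prod_(i < k) U i (a i) j.

Definition tnorm2 (T : tensor) : R := \sum_(a : midx) T a ^+ 2.

Definition Gobj (A : tensor) (U : factors) (x : 'rV[R]_r) : R :=
  tnorm2 (fun a => A a - mlmul U x a).
Definition gobj (A : tensor) (U : factors) (x : 'rV[R]_r) : R :=
  Gobj A U x / 2.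

Definition dirU (i : 'I_k) (a : nat) (b : 'I_r) : factors :=
  fun j => \matrix_(p, q) ((i == j) && (val p == a) && (q == b))%:R.

Definition egradU (f : factors -> 'rV[R]_r -> R) (U : factors) (x : 'rV[R]_r)
    (i : 'I_k) : 'M[R]_(n i, r) :=
  \matrix_(a, b) derive1 (fun t : R => f (fun j => U j + t *: dirU i a b j) x) 0.

Definition egradx (f : factors -> 'rV[R]_r -> R) (U : factors) (x : 'rV[R]_r)
    : 'rV[R]_r :=
  \row_j derive1 (fun t : R => f U (x + t *: delta_mx 0 j)) 0.

Definition stiefel m (V : 'M[R]_(m, r)) : Prop := V^T *m V = 1%:M.
Definition unit_cols m (V : 'M[R]_(m, r)) : Prop :=
  forall j : 'I_r, \sum_(a < m) V a j ^+ 2 = 1.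
Definition oblique m (V : 'M[R]_(m, r)) : Prop :=
  unit_cols V /\ \rank V = r.

(* W_{n,r,*}: first s factors (0-based indices i < s) Stiefel, the others
   oblique, all weights nonzero *)
Definition inW (s : nat) (U : factors) (x : 'rV[R]_r) : Prop :=
  (forall i : 'I_k, (i < s)%N -> stiefel (U i)) /\
  (forall i : 'I_k, (s <= i)%N -> oblique (U i)) /\
  (forall j : 'I_r, x 0 j != 0).

(* tangent space of W_{n,r,*} at (U,x), as a subspace of the ambient
   Euclidean space prod_i R^{n_i x r} x R^r *)
Definition tangentW (s : nat) (U : factors) (Z : factors) (z : 'rV[R]_r) : Prop :=
  (forall i : 'I_k, (i < s)%N -> (U i)^T *m Z i + (Z i)^T *m U i = 0) /\
  (forall i : 'I_k, (s <= i)%N ->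
      forall j : 'I_r, \sum_(a < n i) U i a j * Z i a j = 0).

Definition mxdot m (X Y : 'M[R]_(m, r)) : R :=
  \sum_(a < m) \sum_(b < r) X a b * Y a b.
Definition ambdot (Y : factors) (y : 'rV[R]_r) (Z : factors) (z : 'rV[R]_r) : R :=
  \sum_(i < k) mxdot (Y i) (Z i) + \sum_(j < r) y 0 j * z 0 j.

(* (Xi, xi) is the Riemannian gradient of f on W at (U,x) for the metric
   induced by the ambient Euclidean inner product: it is tangent and
   represents the differential of f on the tangent space *)
Definition is_riem_grad (s : nat) (f : factors -> 'rV[R]_r -> R)
    (U : factors) (x : 'rV[R]_r) (Xi : factors) (xi : 'rV[R]_r) : Prop :=
  tangentW s U Xi xi /\
  forall (Z : factors) (z : 'rV[R]_r), tangentW s U Z z ->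
    ambdot Xi xi Z z = ambdot (egradU f U x) (egradx f U x) Z z.

Definition critical_on_W (s : nat) (f : factors -> 'rV[R]_r -> R)
    (U : factors) (x : 'rV[R]_r) : Prop :=
  inW s U x /\ is_riem_grad s f U x (fun i => 0) 0.

Definition KKT_LRPOTA (s : nat) (A : tensor) (U : factors) (x : 'rV[R]_r) : Prop :=
  (forall i : 'I_k, (i < s)%N -> stiefel (U i)) /\
  (forall i : 'I_k, (s <= i)%N -> unit_cols (U i)) /\
  (forall i : 'I_k, (i < s)%N -> exists P : 'M[R]_r,
      P^T = P /\ egradU (Gobj A) U x i = U i *m P) /\
  (forall i : 'I_k, (s <= i)%N -> exists p : 'rV[R]_r,
      egradU (Gobj A) U x i = U i *m diag_mx p) /\
  egradx (Gobj A) U x = 0.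

End LRPOTA.

From HB Require Import structures.
From mathcomp Require Import all_boot all_order all_algebra.
From mathcomp Require Import all_classical all_reals all_analysis.
Set Implicit Arguments. Unset Strict Implicit. Unset Printing Implicit Defensive.
Import Order.TTheory GRing.Theory Num.Theory.
Local Open Scope ring_scope.

(* Since g = G / 2, the Riemannian gradient of g vanishes iff the Euclidean
   gradient of G is orthogonal to the tangent space of W.  That tangent space
   is cut out blockwise by U^T Z + Z^T U = 0 (Stiefel blocks) and by
   <u_j, z_j> = 0 (oblique blocks), with no condition on the weights, so its
   orthogonal complement consists of the (U P, P symmetric; U diag p; 0).
   One inclusion is the vanishing of <U P, Z> = tr (P U^T Z) for skew U^T Z;
   for the other, subtract from the gradient its explicit normal part: the
   residual is tangent and orthogonal to the normal part, hence orthogonal to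
   itself, hence zero. *)

Section BigDerivable.
Context {R : realType} {V : normedModType R}.
Variables (x v : V).

Lemma derivable_big_sum (I : Type) (s : seq I) (P : pred I) (F : I -> V -> R) :
  (forall i, derivable (F i) x v) ->
  derivable (fun t => \sum_(i <- s | P i) F i t) x v.
Proof.
move=> dF; elim: s => [|i s IHs].
  by under eq_fun do rewrite big_nil; exact: derivable_cst.
under eq_fun do rewrite big_cons.
by case: (P i) => //; exact: derivableD.
Qed.

Lemma derivable_big_prod (I : Type) (s : seq I) (P : pred I) (F : I -> V -> R) :
  (forall i, derivable (F i) x v) ->
  derivable (fun t => \prod_(i <- s | P i) F i t) x v.
Proof.
move=> dF; elim: s => [|i s IHs].
  by under eq_fun do rewrite big_nil; exact: derivable_cst.
under eq_fun do rewrite big_cons.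
by case: (P i) => //; exact: derivableM.
Qed.

Lemma derivable_affine (c d : R) (f : V -> R) :
  derivable f x v -> derivable (fun t => c + f t * d) x v.
Proof.
move=> df; apply: derivableD; first exact: derivable_cst.
by apply: derivableM => //; exact: derivable_cst.
Qed.

End BigDerivable.

Section Mxdot.
Variables (R : realType) (r : nat).
Implicit Types (m : nat).

Lemma mxdot_trace m (X Y : 'M[R]_(m, r)) : mxdot X Y = \tr (X^T *m Y).
Proof.
rewrite /mxdot /mxtrace exchange_big; apply: eq_bigr => b _; rewrite mxE.
by apply: eq_bigr => a _; rewrite mxE.
Qed.

Lemma mxdotDl m (X Y Z : 'M[R]_(m, r)) : mxdot (X + Y) Z = mxdot X Z + mxdot Y Z.
Proof. by rewrite !mxdot_trace linearD /= mulmxDl mxtraceD. Qed.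

Lemma mxdot0l m (Z : 'M[R]_(m, r)) : mxdot 0 Z = 0.
Proof. by rewrite mxdot_trace trmx0 mul0mx mxtrace0. Qed.

Lemma mxdotZl m (c : R) (X Z : 'M[R]_(m, r)) : mxdot (c *: X) Z = c * mxdot X Z.
Proof. by rewrite !mxdot_trace linearZ /= -scalemxAl mxtraceZ. Qed.

Lemma mxdotxx_ge0 m (X : 'M[R]_(m, r)) : 0 <= mxdot X X.
Proof. by apply: sumr_ge0 => a _; apply: sumr_ge0 => b _; rewrite -expr2 sqr_ge0. Qed.

Lemma mxdotxx_eq0 m (X : 'M[R]_(m, r)) : mxdot X X = 0 -> X = 0.
Proof.
move=> X0; apply/matrixP => a b; rewrite mxE.
have row_ge0 c : 0 <= \sum_(d < r) X c d * X c d.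
  by apply: sumr_ge0 => d _; rewrite -expr2 sqr_ge0.
have Xa0 := psumr_eq0P (fun c _ => row_ge0 c) X0 (i := a) isT.
have /eqP := psumr_eq0P (fun d _ => sqr_ge0 (X a d)) Xa0 (i := b) isT.
by rewrite mulf_eq0 orbb => /eqP.
Qed.

Lemma mxdot_sym_tangent m (V Z : 'M[R]_(m, r)) (P : 'M[R]_r) :
  P^T = P -> V^T *m Z + Z^T *m V = 0 -> mxdot (V *m P) Z = 0.
Proof.
move=> PT VZ0; rewrite mxdot_trace trmx_mul PT -mulmxA.
set W := V^T *m Z.
have WT : W^T = - W.
  by rewrite trmx_mul trmxK; apply/eqP; rewrite -subr_eq0 opprK addrC VZ0.
(* the trace of a symmetric times a skew-symmetric matrix vanishes *)
have trN : \tr (P *m W) = - \tr (P *m W).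
  by rewrite -{1}mxtrace_tr trmx_mul WT PT mulNmx raddfN /= mxtrace_mulC.
by apply/eqP; rewrite -[_ == 0](mulrn_eq0 _ 2) mulr2n {1}trN addNr.
Qed.

Lemma mxdot_diag_tangent m (V Z : 'M[R]_(m, r)) (p : 'rV[R]_r) :
  (forall j, \sum_(a < m) V a j * Z a j = 0) -> mxdot (V *m diag_mx p) Z = 0.
Proof.
move=> VZ0; rewrite /mxdot exchange_big /=; apply: big1 => b _.
transitivity (p 0 b * \sum_(a < m) V a b * Z a b); last by rewrite VZ0 mulr0.
rewrite mulr_sumr; apply: eq_bigr => a _.
by rewrite mul_mx_diag mxE mulrAC mulrC.
Qed.

Definition sym_part (X : 'M[R]_r) : 'M[R]_r := 2^-1 *: (X + X^T).

Lemma tr_sym_part (X : 'M[R]_r) : (sym_part X)^T = sym_part X.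
Proof. by rewrite /sym_part linearZ linearD /= trmxK addrC. Qed.

Lemma stiefel_tangent_residual m (V G : 'M[R]_(m, r)) :
  stiefel V -> V^T *m (G - V *m sym_part (V^T *m G))
                + (G - V *m sym_part (V^T *m G))^T *m V = 0.
Proof.
move=> VTV; rewrite mulmxBr linearB /= mulmxBl trmx_mul tr_sym_part.
rewrite mulmxA VTV mul1mx -mulmxA VTV mulmx1 addrACA -opprD.
have twice_half : (2^-1 : R) *+ 2 = 1 by rewrite -(mulr_natr (2^-1 : R) 2) mulVf ?pnatr_eq0.
rewrite /sym_part -scalerDl -mulr2n twice_half scale1r.
by rewrite trmx_mul trmxK subrr.
Qed.

Definition col_dots m (V G : 'M[R]_(m, r)) : 'rV[R]_r :=
  \row_j \sum_(a < m) V a j * G a j.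

Lemma unit_cols_tangent_residual m (V G : 'M[R]_(m, r)) :
  unit_cols V -> forall j,
  \sum_(a < m) V a j * (G - V *m diag_mx (col_dots V G)) a j = 0.
Proof.
move=> Vunit j; under eq_bigr do rewrite mul_mx_diag !mxE mulrBr mulrA -expr2.
by rewrite sumrB -mulr_suml Vunit mul1r subrr.
Qed.

End Mxdot.

Section Ambient.
Variables (R : realType) (k : nat) (n : 'I_k -> nat) (r : nat).
Implicit Types (Y Z : factors R n r) (y z : 'rV[R]_r).

Lemma ambdotE Y y Z z : ambdot Y y Z z = \sum_(i < k) mxdot (Y i) (Z i) + mxdot y z.
Proof. by rewrite /ambdot /mxdot big_ord1. Qed.

Lemma ambdotDl Y Y' y y' Z z :
  ambdot (fun i => Y i + Y' i) (y + y') Z z = ambdot Y y Z z + ambdot Y' y' Z z.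
Proof.
rewrite !ambdotE mxdotDl addrACA; congr (_ + _).
by rewrite -big_split; apply: eq_bigr => i _; exact: mxdotDl.
Qed.

Lemma ambdotZl (c : R) Y y Z z :
  ambdot (fun i => c *: Y i) (c *: y) Z z = c * ambdot Y y Z z.
Proof.
rewrite !ambdotE mxdotZl mulrDr; congr (_ + _).
by rewrite mulr_sumr; apply: eq_bigr => i _; exact: mxdotZl.
Qed.

Lemma ambdot0l Z z : ambdot (fun i => 0) 0 Z z = 0.
Proof. by rewrite ambdotE mxdot0l addr0 big1 // => i _; exact: mxdot0l. Qed.

Lemma ambdotxx_eq0 Y y : ambdot Y y Y y = 0 -> (forall i, Y i = 0) /\ y = 0.
Proof.
rewrite ambdotE => /eqP; rewrite paddr_eq0 ?mxdotxx_ge0 //; last first.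
  by apply: sumr_ge0 => i _; exact: mxdotxx_ge0.
move=> /andP[/eqP /psumr_eq0P Y0 /eqP /mxdotxx_eq0 ->]; split=> // i.
by apply: mxdotxx_eq0; apply: Y0 => // j _; exact: mxdotxx_ge0.
Qed.

End Ambient.

Section GradientScaling.
Variables (R : realType) (k : nat) (n : 'I_k -> nat) (r : nat).
Variable A : tensor R n.

Lemma derivable_Gobj {V : normedModType R} (y v : V)
    (Uf : V -> factors R n r) (xf : V -> 'rV[R]_r) :
  (forall i p q, derivable (fun t => Uf t i p q) y v) ->
  (forall q, derivable (fun t => xf t 0 q) y v) ->
  derivable (fun t => Gobj A (Uf t) (xf t)) y v.
Proof.
move=> dU dx; apply: derivable_big_sum => a; under eq_fun do rewrite expr2.
have dres : derivable (fun t => A a - mlmul (Uf t) (xf t) a) y v.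
  apply: derivableB; first exact: derivable_cst.
  apply: derivable_big_sum => j; apply: derivableM => //.
  by apply: derivable_big_prod => i; exact: dU.
exact: derivableM.
Qed.

Lemma derive1_gobj (Uf : R -> factors R n r) (xf : R -> 'rV[R]_r) :
  (forall i p q, derivable (fun t => Uf t i p q) 0 1) ->
  (forall q, derivable (fun t => xf t 0 q) 0 1) ->
  derive1 (fun t => gobj A (Uf t) (xf t)) 0
    = 2^-1 * derive1 (fun t => Gobj A (Uf t) (xf t)) 0.
Proof.
move=> dU dx; rewrite !derive1E.
have -> : (fun t => gobj A (Uf t) (xf t)) = 2^-1 \*: (fun t => Gobj A (Uf t) (xf t)).
  by apply/funext => t; rewrite /gobj mulrC.
by rewrite deriveZ //; exact: derivable_Gobj.
Qed.

Lemma egradU_gobj (U : factors R n r) (x : 'rV[R]_r) (i : 'I_k) :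
  egradU (gobj A) U x i = 2^-1 *: egradU (Gobj A) U x i.
Proof.
apply/matrixP => a b; rewrite !mxE derive1_gobj // => j p q.
have -> : (fun t => (U j + t *: dirU R n i a b j) p q)
    = (fun t => U j p q + t * dirU R n i a b j p q) by apply/funext => t; rewrite !mxE.
by apply: derivable_affine; exact: derivable_id.
Qed.

Lemma egradx_gobj (U : factors R n r) (x : 'rV[R]_r) :
  egradx (gobj A) U x = 2^-1 *: egradx (Gobj A) U x.
Proof.
apply/rowP => b; rewrite !mxE derive1_gobj // => q.
have -> : (fun t => (x + t *: delta_mx 0 b) 0 q)
    = (fun t => x 0 q + t * (delta_mx 0 b : 'rV[R]_r) 0 q) by apply/funext => t; rewrite !mxE.
by apply: derivable_affine; exact: derivable_id.
Qed.

Lemma ambdot_egrad_gobj (U : factors R n r) (x : 'rV[R]_r) Z z :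
  ambdot (egradU (gobj A) U x) (egradx (gobj A) U x) Z z
    = 2^-1 * ambdot (egradU (Gobj A) U x) (egradx (Gobj A) U x) Z z.
Proof.
rewrite -ambdotZl -egradx_gobj; congr ambdot.
by apply: functional_extensionality_dep => i; exact: egradU_gobj.
Qed.

End GradientScaling.

Section NormalSpace.
Variables (R : realType) (k : nat) (n : 'I_k -> nat) (r : nat).
Variables (s : nat) (U : factors R n r).

Definition normalW (G : factors R n r) (g : 'rV[R]_r) : Prop :=
  (forall i : 'I_k, (i < s)%N -> exists P : 'M[R]_r, P^T = P /\ G i = U i *m P) /\
  (forall i : 'I_k, (s <= i)%N -> exists p : 'rV[R]_r, G i = U i *m diag_mx p) /\
  g = 0.

Lemma normalW_orthogonal G g Z z : normalW G g -> tangentW s U Z z -> ambdot G g Z z = 0.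
Proof.
move=> [GP [Gp ->]] [Zst Zob]; rewrite ambdotE.
rewrite [mxdot _ _]big1 ?addr0 => [|a _]; last by rewrite big1 // => b _; rewrite mxE mul0r.
apply: big1 => i _; case: (ltnP i s) => [lt_is | le_si].
  by have [P [PT ->]] := GP i lt_is; exact: mxdot_sym_tangent (Zst i lt_is).
by have [p ->] := Gp i le_si; exact: mxdot_diag_tangent (Zob i le_si).
Qed.

Hypothesis U_stiefel : forall i : 'I_k, (i < s)%N -> stiefel (U i).
Hypothesis U_unit_cols : forall i : 'I_k, (s <= i)%N -> unit_cols (U i).

Definition normal_part (G : factors R n r) : factors R n r := fun i =>
  if (i < s)%N then U i *m sym_part ((U i)^T *m G i)
  else U i *m diag_mx (col_dots (U i) (G i)).

Lemma normalW_normal_part G : normalW (normal_part G) 0.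
Proof.
rewrite /normal_part; split; last split=> //.
  by move=> i ->; exists (sym_part ((U i)^T *m G i)); rewrite tr_sym_part.
by move=> i; rewrite leqNgt => /negbTE ->; eexists.
Qed.

Lemma tangentW_sub_normal_part G z :
  tangentW s U (fun i => G i - normal_part G i) z.
Proof.
rewrite /normal_part; split=> i.
  by move=> lt_is; rewrite lt_is; exact: stiefel_tangent_residual (U_stiefel lt_is).
move=> le_si; rewrite ltnNge le_si /=.
exact: unit_cols_tangent_residual (U_unit_cols le_si).
Qed.

Lemma orthogonal_normalW G g :
  (forall Z z, tangentW s U Z z -> ambdot G g Z z = 0) -> normalW G g.
Proof.
move=> Gorth; set N := normal_part G; set M := fun i => G i - N i.
have M_tangent : tangentW s U M g by exact: tangentW_sub_normal_part.
have splitG : ambdot G g M g = ambdot M g M g + ambdot N 0 M g.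
  rewrite -ambdotDl addr0; congr ambdot.
  by apply: functional_extensionality_dep => i; rewrite subrK.
rewrite Gorth // (normalW_orthogonal (normalW_normal_part G) M_tangent) addr0 in splitG.
have [M0 g0] := ambdotxx_eq0 (esym splitG).
have -> : G = N by apply: functional_extensionality_dep => i; apply/subr0_eq; exact: M0.
by rewrite g0; exact: normalW_normal_part.
Qed.

End NormalSpace.

Lemma critical_on_WE (R : realType) (k : nat) (n : 'I_k -> nat) (r s : nat)
    (f : factors R n r -> 'rV[R]_r -> R) (U : factors R n r) (x : 'rV[R]_r) :
  critical_on_W s f U x <->
  inW s U x /\ forall Z z, tangentW s U Z z -> ambdot (egradU f U x) (egradx f U x) Z z = 0.
Proof.
rewrite /critical_on_W /is_riem_grad; split=> [[UxW [_ grad0]]|[UxW orth]].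
  by split=> // Z z TZ; rewrite -grad0 // ambdot0l.
split=> //; split=> [|Z z TZ]; last by rewrite ambdot0l orth.
split=> [i _|i _ j]; first by rewrite mulmx0 trmx0 mul0mx addr0.
by rewrite big1 // => a _; rewrite mxE mulr0.
Qed.

Theorem proposition4p5 (R : realType) (k : nat) (n : 'I_k -> nat) (r : nat)
    (s : nat) (A : tensor R n)
    (hs1 : (1 <= s)%N) (hsk : (s <= k)%N)
    (hr : forall i : 'I_k, (r <= n i)%N)
    (U : factors R n r) (x : 'rV[R]_r) :
  inW s U x ->
  (critical_on_W s (gobj A) U x <-> KKT_LRPOTA s A U x).
Proof.
move=> UxW; have [U_stiefel [U_oblique _]] := UxW.
have U_unit_cols (i : 'I_k) : (s <= i)%N -> unit_cols (U i) by move=> /U_oblique[].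
rewrite critical_on_WE; split=> [[_ orth]|[_ [_ GN]]].
  do 2!split=> //; apply: (orthogonal_normalW U_stiefel U_unit_cols) => Z z TZ.
  by have /eqP := orth Z z TZ; rewrite ambdot_egrad_gobj mulf_eq0 invr_eq0 pnatr_eq0 => /eqP.
by split=> // Z z TZ; rewrite ambdot_egrad_gobj (normalW_orthogonal GN TZ) mulr0.
Qed.
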